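(* Let $0<q<1$ and let $s_1,\dots,s_m$ be positive integers with $s_1>1$. Then \[ \sum_{k=1}^m \zeta[s_1,\dots,s_{k-1},1+s_k,s_{k+1},\dots,s_m] = \sum_{k=1}^m \sum_{j=0}^{s_k-2}\zeta[s_1,\dots,s_{k-1},s_k-j,j+1,s_{k+1},\dots,s_m], \] where the inner sum on the right is zero if $s_k<2$.
   Context: Fix $0<q<1$. For real $x$, $[x]_q := (1-q^x)/(1-q)$. For positive integers $s_1,\dots,s_N$ with $s_1>1$, $\zeta[s_1,\dots,s_N] := \sum_{k_1>\cdots>k_N>0}\prod_{j=1}^N q^{(s_j-1)k_j}/[k_j]_q^{s_j}$ (sum over positive integers). *)

From Stdlib Require Import Reals List.
From Coquelicot Require Import Coquelicot.
Import ListNotations.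
Open Scope R_scope.

Definition qint (q : R) (k : nat) : R := (1 - q ^ k) / (1 - q).

Definition zterm (q : R) (s k : nat) : R := q ^ ((s - 1) * k) / (qint q k) ^ s.

Definition lsum (l : list nat) (f : nat -> R) : R := fold_right Rplus 0 (map f l).

(* truncated sum: sum over M > k_1 > k_2 > ... > k_N > 0 *)
Fixpoint zeta_trunc (q : R) (s : list nat) (M : nat) : R :=
  match s with
  | [] => 1
  | a :: s' =>
      fold_right Rplus 0
        (map (fun k => zterm q a k * zeta_trunc q s' k) (seq 1 (Nat.pred M)))
  end.

(* zeta[s_1,...,s_N] = sum_{k_1 > ... > k_N > 0} prod_j q^{(s_j-1)k_j}/[k_j]_q^{s_j},
   the value of the series of nonnegative terms, i.e. the limit of the
   (nondecreasing) truncations k_1 < M as M -> oo. *)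
Definition qzeta (q : R) (s : list nat) : R := real (Lim_seq (fun M => zeta_trunc q s M)).

From Stdlib Require Import Reals List Lia Lra.
From Coquelicot Require Import Coquelicot.
Import ListNotations.
Open Scope R_scope.

(* Truncate all series at [k_1 < N].  Prepending an index [b] to a sequence [Y] of truncated
   values gives [sum_(0<n<N) z_b(n) Y(n)] with [z_b(n) = q^((b-1)n) / [n]^b], and the two sides
   of the identity are linked by the partial fraction identity
     [sum_(j=0)^(b-2) z_(b-j)(d+p) z_(j+1)(p) = z_b(p) (w(d) - w(d+p)) - z_b(d+p) w(d)],
   where [w(m) = q^m / [m]] and which comes from [[d+p] = [d] + q^d [p]].  Summation by parts
   then shows that, for every [N], the truncated right-hand side equals the truncated left-hand
   side minus the defect [sum_(0<p<N) (zeta_(p+1)(s) - zeta_p(s)) sum_(N-p<=m<N) w(m)].  When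
   [s_1 >= 2] the increments of [zeta(s)] are [O((q rho)^p)] for some [rho > 1] with [q rho < 1],
   and [w(m) <= q^m], so the defect is [O((q rho)^N)]; letting [N] tend to infinity gives the
   identity. *)


Definition psum (n : nat) (f : nat -> R) : R :=
  fold_right Rplus 0 (map f (seq 1 (Nat.pred n))).

Lemma psum_S n f : (1 <= n)%nat -> psum (S n) f = psum n f + f n.
Proof.
  intros Hn. destruct n as [|n]; [lia|]. unfold psum. cbn [Nat.pred].
  rewrite seq_S, map_app, fold_right_app. cbn.
  replace (1 + n)%nat with (S n) by lia.
  induction (map f (seq 1 n)); cbn; lra.
Qed.

Lemma psum_ind (P : nat -> Prop) :
  P 0%nat -> P 1%nat -> (forall n, (1 <= n)%nat -> P n -> P (S n)) -> forall n, P n.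
Proof. intros H0 H1 HS n. induction n as [|[|n] IH]; auto. apply HS; auto; lia. Qed.

Lemma psum_ext n f g : (forall k, (1 <= k < n)%nat -> f k = g k) -> psum n f = psum n g.
Proof.
  intros H. unfold psum. f_equal. apply map_ext_in. intros k Hk.
  apply in_seq in Hk. apply H. lia.
Qed.

Lemma psum_add n f g : psum n (fun k => f k + g k) = psum n f + psum n g.
Proof.
  induction n as [| |n Hn IH] using psum_ind; [cbn; ring..|].
  rewrite !psum_S by exact Hn. lra.
Qed.

Lemma psum_scal_l n c f : psum n (fun k => c * f k) = c * psum n f.
Proof.
  induction n as [| |n Hn IH] using psum_ind; [cbn; ring..|].
  rewrite !psum_S by exact Hn. lra.
Qed.

Lemma psum_scal_r n c f : psum n (fun k => f k * c) = psum n f * c.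
Proof.
  induction n as [| |n Hn IH] using psum_ind; [cbn; ring..|].
  rewrite !psum_S by exact Hn. lra.
Qed.

Lemma psum_sub n f g : psum n (fun k => f k - g k) = psum n f - psum n g.
Proof.
  induction n as [| |n Hn IH] using psum_ind; [cbn; ring..|].
  rewrite !psum_S by exact Hn. lra.
Qed.

Lemma psum_0 n : psum n (fun _ => 0) = 0.
Proof.
  induction n as [| |n Hn IH] using psum_ind; [cbn; ring..|].
  rewrite psum_S by exact Hn. lra.
Qed.

Lemma psum_le n f g : (forall k, (1 <= k < n)%nat -> f k <= g k) -> psum n f <= psum n g.
Proof.
  induction n as [| |n Hn IH] using psum_ind; intros Hfg; [cbn; lra..|].
  rewrite !psum_S by exact Hn.
  apply Rplus_le_compat; [apply IH; intros k Hk|]; apply Hfg; lia.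
Qed.

Lemma psum_nonneg n f : (forall k, (1 <= k < n)%nat -> 0 <= f k) -> 0 <= psum n f.
Proof. intros H. rewrite <- (psum_0 n). now apply psum_le. Qed.

Lemma psum_telescope n u : (1 <= n)%nat -> psum n (fun k => u (S k) - u k) = u n - u 1%nat.
Proof.
  induction n as [| |n Hn IH] using psum_ind; intros H; [lia|cbn; ring|].
  rewrite psum_S, IH by lia. ring.
Qed.

Lemma psum_pow n x : (1 <= n)%nat -> psum n (pow x) * (1 - x) = x - x ^ n.
Proof.
  induction n as [| |n Hn IH] using psum_ind; intros H; [lia|cbn; ring|].
  rewrite psum_S by exact Hn. rewrite Rmult_plus_distr_r, IH by exact Hn. cbn; ring.
Qed.

Lemma psum_pow_le_lt1 n x : 0 <= x < 1 -> psum n (pow x) <= 1 / (1 - x).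
Proof.
  intros Hx. destruct n as [|n].
  - cbn. apply Rlt_le, Rdiv_lt_0_compat; lra.
  - apply Rcomplements.Rle_div_r; [lra|]. rewrite psum_pow by lia.
    pose proof (pow_le x (S n) (proj1 Hx)). lra.
Qed.

Lemma psum_pow_le_gt1 n x : 1 < x -> psum n (pow x) <= x ^ n / (x - 1).
Proof.
  intros Hx. destruct n as [|n].
  - cbn. apply Rlt_le, Rdiv_lt_0_compat; lra.
  - apply Rcomplements.Rle_div_r; [lra|].
    replace (x - 1) with (- (1 - x)) by ring. rewrite <- Ropp_mult_distr_r, psum_pow by lia. lra.
Qed.

Lemma lsum_seq_S n f : lsum (seq 0 (S n)) f = f 0%nat + lsum (seq 0 n) (fun k => f (S k)).
Proof. unfold lsum. cbn [seq map fold_right]. now rewrite <- seq_shift, map_map. Qed.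

Lemma lsum_psum (l : list nat) n F :
  lsum l (fun j => psum n (F j)) = psum n (fun k => lsum l (fun j => F j k)).
Proof.
  induction l as [|j l IH]; unfold lsum in *; cbn.
  - symmetry. apply psum_0.
  - rewrite IH, <- psum_add. reflexivity.
Qed.

Lemma lsum_ext (l : list nat) f g : (forall j, f j = g j) -> lsum l f = lsum l g.
Proof. intros H. unfold lsum. f_equal. now apply map_ext. Qed.

Lemma lsum_scal_l (l : list nat) c f : lsum l (fun j => c * f j) = c * lsum l f.
Proof. induction l; unfold lsum in *; cbn; [ring|]. rewrite IHl. ring. Qed.

Lemma lsum_scal_r (l : list nat) c f : lsum l (fun j => f j * c) = lsum l f * c.
Proof. induction l; unfold lsum in *; cbn; [ring|]. rewrite IHl. ring. Qed.

Lemma is_lim_seq_lsum (l : list nat) (u : nat -> nat -> R) (v : nat -> R) :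
  (forall k, In k l -> is_lim_seq (u k) (v k)) ->
  is_lim_seq (fun N => lsum l (fun k => u k N)) (lsum l v).
Proof.
  induction l as [|k l IH]; intros H; unfold lsum in *; cbn.
  - apply is_lim_seq_const.
  - apply is_lim_seq_plus'; [apply H; now left|]. apply IH. intros j Hj. apply H. now right.
Qed.

Definition raise_sum (Z : list nat -> R) (s : list nat) : R :=
  lsum (seq 0 (length s)) (fun k => Z (firstn k s ++ (1 + nth k s 0%nat)%nat :: skipn (S k) s)).

Definition split_sum (Z : list nat -> R) (s : list nat) : R :=
  lsum (seq 0 (length s)) (fun k => lsum (seq 0 (nth k s 0%nat - 1))
    (fun j => Z (firstn k s ++ (nth k s 0%nat - j)%nat :: (j + 1)%nat :: skipn (S k) s))).

Section QZeta.

Variable q : R.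
Hypothesis hq0 : 0 < q.
Hypothesis hq1 : q < 1.

Lemma pow_q_pos m : 0 < q ^ m.
Proof. apply pow_lt; lra. Qed.

Lemma pow_q_le1 m : q ^ m <= 1.
Proof. induction m as [|m IH]; cbn; [lra|]. pose proof (pow_q_pos m). nra. Qed.

Lemma pow_q_lt1 m : (1 <= m)%nat -> q ^ m < 1.
Proof. intros Hm. destruct m as [|m]; [lia|]. cbn. pose proof (pow_q_le1 m). nra. Qed.

Lemma qint_ge1 k : (1 <= k)%nat -> 1 <= qint q k.
Proof.
  intros Hk. destruct k as [|k]; [lia|]. unfold qint. cbn.
  pose proof (pow_q_le1 k). apply Rcomplements.Rle_div_r; nra.
Qed.

Definition qweight (m : nat) : R := q ^ m / qint q m.

Lemma qweight_nonneg m : (1 <= m)%nat -> 0 <= qweight m.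
Proof.
  intros Hm. pose proof (qint_ge1 m Hm). pose proof (pow_q_pos m).
  apply Rlt_le, Rdiv_lt_0_compat; lra.
Qed.

Lemma qweight_le m : (1 <= m)%nat -> qweight m <= q ^ m.
Proof.
  intros Hm. pose proof (qint_ge1 m Hm). pose proof (pow_q_pos m).
  apply Rcomplements.Rle_div_l; nra.
Qed.

Lemma zterm_nonneg b k : (1 <= k)%nat -> 0 <= zterm q b k.
Proof.
  intros Hk. pose proof (qint_ge1 k Hk). apply Rlt_le, Rdiv_lt_0_compat.
  - apply pow_q_pos.
  - apply pow_lt; lra.
Qed.

Lemma zterm_le1 b k : (1 <= k)%nat -> zterm q b k <= 1.
Proof.
  intros Hk. pose proof (qint_ge1 k Hk). pose proof (pow_R1_Rle _ b H).
  pose proof (pow_q_le1 ((b - 1) * k)). apply Rcomplements.Rle_div_l; nra.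
Qed.

Lemma zterm_le_pow b k : (2 <= b)%nat -> (1 <= k)%nat -> zterm q b k <= q ^ k.
Proof.
  intros Hb Hk. pose proof (qint_ge1 k Hk). pose proof (pow_R1_Rle _ b H).
  unfold zterm. replace ((b - 1) * k)%nat with (k + (b - 2) * k)%nat by nia.
  rewrite pow_add. pose proof (pow_q_le1 ((b - 2) * k)). pose proof (pow_q_pos k).
  apply Rcomplements.Rle_div_l; nra.
Qed.

Lemma zterm_1 k : zterm q 1 k = 1 / qint q k.
Proof. unfold zterm. cbn. now rewrite Rmult_1_r. Qed.

Lemma zterm_S b k : (1 <= b)%nat -> (1 <= k)%nat -> zterm q (S b) k = zterm q b k * qweight k.
Proof.
  intros Hb Hk. pose proof (qint_ge1 k Hk). unfold zterm, qweight.
  replace (S b - 1)%nat with (S (b - 1)) by lia.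
  rewrite Nat.mul_succ_l, pow_add. cbn [pow]. field.
  split; [lra|]. apply pow_nonzero; lra.
Qed.

Definition zkernel (a n p : nat) : R :=
  lsum (seq 0 (a - 1)) (fun j => zterm q (a - j) n * zterm q (j + 1) p).

Lemma zkernel_S a n p : (1 <= a)%nat -> (1 <= p)%nat ->
  zkernel (S a) n p = zterm q (S a) n * zterm q 1 p + qweight p * zkernel a n p.
Proof.
  intros Ha Hp. unfold zkernel. replace (S a - 1)%nat with (S (a - 1)) by lia.
  rewrite lsum_seq_S, (Rmult_comm (qweight p)), <- lsum_scal_r. f_equal.
  unfold lsum. f_equal. apply map_ext_in. intros j Hj. apply in_seq in Hj.
  replace (S a - S j)%nat with (a - j)%nat by lia.
  replace (S j + 1)%nat with (S (j + 1)) by lia.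
  rewrite zterm_S by lia. ring.
Qed.

Lemma zkernel_partial_fraction a d p : (1 <= a)%nat -> (1 <= d)%nat -> (1 <= p)%nat ->
  zkernel a (d + p) p
  = zterm q a p * (qweight d - qweight (d + p)) - zterm q a (d + p) * qweight d.
Proof.
  intros Ha Hd Hp.
  pose proof (pow_q_lt1 d Hd). pose proof (pow_q_lt1 p Hp).
  pose proof (pow_q_pos d). pose proof (pow_q_pos p).
  assert (q ^ d * q ^ p < 1) by nra.
  induction a as [|a IH]; [lia|].
  destruct (Nat.eq_dec a 0) as [->|Ha0].
  - unfold zkernel, lsum. cbn [Nat.sub seq map fold_right].
    rewrite !zterm_1. unfold qweight, qint. rewrite pow_add. field. lra.
  - rewrite zkernel_S, IH, zterm_1, !zterm_S by lia.
    unfold qweight, qint. rewrite pow_add. field. lra.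
Qed.

Definition qharm (k : nat) : R := psum (S k) qweight.

(* [qtail N p] is the sum of [qweight m] over [N - p <= m < N]. *)
Definition qtail (N p : nat) : R := qharm (N - 1) - qharm (N - 1 - p).

Lemma qharm_S k : qharm (S k) = qharm k + qweight (S k).
Proof. unfold qharm. apply psum_S. lia. Qed.

Lemma qtail_S N p : (1 <= p < N)%nat -> qtail (S N) p = qtail N p + (qweight N - qweight (N - p)).
Proof.
  intros Hp. unfold qtail.
  replace (S N - 1)%nat with (S (N - 1)) by lia.
  replace (S (N - 1) - p)%nat with (S (N - 1 - p)) by lia.
  rewrite !qharm_S. replace (S (N - 1)) with N by lia.
  replace (S (N - 1 - p)) with (N - p)%nat by lia. ring.
Qed.

Lemma qtail_diag N : qtail (S N) N = qharm N.
Proof.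
  unfold qtail. replace (S N - 1 - N)%nat with 0%nat by lia.
  replace (S N - 1)%nat with N by lia. change (qharm 0) with 0. ring.
Qed.

Lemma qharm_sub_bound j K : (j <= K)%nat ->
  0 <= qharm K - qharm j <= (q ^ S j - q ^ S K) / (1 - q).
Proof.
  induction 1 as [|K HK IH].
  - replace ((q ^ S j - q ^ S j) / (1 - q)) with 0 by (field; lra). lra.
  - rewrite qharm_S.
    replace ((q ^ S j - q ^ S (S K)) / (1 - q)) with ((q ^ S j - q ^ S K) / (1 - q) + q ^ S K)
      by (cbn; field; lra).
    pose proof (qweight_nonneg (S K) ltac:(lia)). pose proof (qweight_le (S K) ltac:(lia)). lra.
Qed.

Lemma qtail_bound N p : (1 <= p < N)%nat -> 0 <= qtail N p <= q ^ (N - p) / (1 - q).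
Proof.
  intros Hp. unfold qtail.
  pose proof (qharm_sub_bound (N - 1 - p) (N - 1) ltac:(lia)) as Hb.
  replace (S (N - 1 - p)) with (N - p)%nat in Hb by lia.
  assert (0 <= q ^ S (N - 1) / (1 - q)) by (apply Rlt_le, Rdiv_lt_0_compat; [apply pow_q_pos|lra]).
  unfold Rdiv in *. lra.
Qed.

Definition qdefect (Y : nat -> R) (N : nat) : R :=
  psum N (fun p => (Y (S p) - Y p) * qtail N p).

Lemma psum_qweight_by_parts (Y : nat -> R) N : (1 <= N)%nat ->
  psum N (fun p => qweight (N - p) * Y p) + qdefect Y N = Y N * qharm (N - 1).
Proof.
  intros HN.
  pose proof (psum_telescope N (fun p => - (Y p * qharm (N - p))) HN) as Hu.
  pose proof (psum_telescope N Y HN) as HY.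
  rewrite (psum_ext N _
             (fun p => qweight (N - p) * Y p - (Y (S p) - Y p) * qharm (N - 1 - p))) in Hu.
  2:{ intros k Hk. replace (N - k)%nat with (S (N - 1 - k)) by lia.
      replace (N - S k)%nat with (N - 1 - k)%nat by lia. rewrite qharm_S. ring. }
  unfold qdefect.
  rewrite (psum_ext N (fun p => (Y (S p) - Y p) * qtail N p)
              (fun p => (Y (S p) - Y p) * qharm (N - 1) - (Y (S p) - Y p) * qharm (N - 1 - p)))
    by (intros; unfold qtail; ring).
  rewrite psum_sub, psum_scal_r, HY. rewrite psum_sub, Nat.sub_diag in Hu.
  change (qharm 0) with 0 in Hu. lra.
Qed.

(* [zeta_trunc q (b :: s)] is convertible to [zcons b (zeta_trunc q s)]. *)
Definition zcons (b : nat) (Y : nat -> R) (N : nat) : R := psum N (fun n => zterm q b n * Y n).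

Lemma zcons_S b Y N : (1 <= N)%nat -> zcons b Y (S N) = zcons b Y N + zterm q b N * Y N.
Proof. apply psum_S. Qed.

Lemma zcons_sub b Y Y' N : zcons b (fun n => Y n - Y' n) N = zcons b Y N - zcons b Y' N.
Proof. unfold zcons. rewrite <- psum_sub. apply psum_ext. intros; ring. Qed.

Lemma lsum_zcons b (l : list nat) F N :
  lsum l (fun j => zcons b (F j) N) = zcons b (fun n => lsum l (fun j => F j n)) N.
Proof.
  unfold zcons. rewrite lsum_psum. apply psum_ext. intros n _.
  rewrite <- lsum_scal_l. reflexivity.
Qed.

Lemma lsum_zcons_zcons a Y N :
  lsum (seq 0 (a - 1)) (fun j => zcons (a - j) (zcons (j + 1) Y) N)
  = psum N (fun n => psum n (fun p => zkernel a n p * Y p)).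
Proof.
  unfold zcons. rewrite lsum_psum. apply psum_ext. intros n _.
  rewrite (lsum_ext _ _ (fun j => psum n (fun p => zterm q (a - j) n * zterm q (j + 1) p * Y p)))
    by (intros j; rewrite <- psum_scal_l; apply psum_ext; intros; ring).
  rewrite lsum_psum. apply psum_ext. intros p _. apply lsum_scal_r.
Qed.

Lemma qdefect_zcons_S a Y N : (1 <= N)%nat ->
  qdefect (zcons a Y) (S N)
  = qdefect (zcons a Y) N
    - psum N (fun p => zterm q a p * Y p * (qweight (N - p) - qweight N))
    + zterm q a N * Y N * qharm N.
Proof.
  intros HN. unfold qdefect. rewrite psum_S, zcons_S, qtail_diag by exact HN.
  rewrite <- psum_sub. f_equal; [|ring]. apply psum_ext. intros p Hp.
  rewrite !zcons_S, qtail_S by lia. ring.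
Qed.

Lemma zcons_split a Y N : (1 <= a)%nat ->
  lsum (seq 0 (a - 1)) (fun j => zcons (a - j) (zcons (j + 1) Y) N)
  = zcons (S a) Y N + zcons a (qdefect Y) N - qdefect (zcons a Y) N.
Proof.
  intros Ha. rewrite lsum_zcons_zcons.
  induction N as [| |N HN IH] using psum_ind; [cbn; ring..|].
  rewrite psum_S, IH, !zcons_S, qdefect_zcons_S, zterm_S by lia.
  rewrite (psum_ext N _ (fun p => zterm q a p * Y p * (qweight (N - p) - qweight N)
                                  - zterm q a N * (qweight (N - p) * Y p))).
  2:{ intros p Hp. replace N with (N - p + p)%nat at 1 2 by lia.
      rewrite zkernel_partial_fraction by lia. replace (N - p + p)%nat with N by lia. ring. }
  rewrite psum_sub, psum_scal_l.
  replace (psum N (fun p => qweight (N - p) * Y p)) with (Y N * qharm (N - 1) - qdefect Y N)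
    by (pose proof (psum_qweight_by_parts Y N HN); lra).
  replace (qharm N) with (qharm (N - 1) + qweight N)
    by (destruct N as [|N]; [lia|]; rewrite qharm_S, Nat.sub_succ, Nat.sub_0_r; reflexivity).
  ring.
Qed.

Lemma raise_sum_trunc_cons a s N :
  raise_sum (fun l => zeta_trunc q l N) (a :: s)
  = zcons (S a) (zeta_trunc q s) N + zcons a (fun n => raise_sum (fun l => zeta_trunc q l n) s) N.
Proof.
  unfold raise_sum. cbn [length]. rewrite lsum_seq_S. f_equal.
  apply (lsum_zcons a _
    (fun k n => zeta_trunc q (firstn k s ++ (1 + nth k s 0%nat)%nat :: skipn (S k) s) n)).
Qed.

Lemma split_sum_trunc_cons a s N :
  split_sum (fun l => zeta_trunc q l N) (a :: s)
  = lsum (seq 0 (a - 1)) (fun j => zcons (a - j) (zcons (j + 1) (zeta_trunc q s)) N)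
    + zcons a (fun n => split_sum (fun l => zeta_trunc q l n) s) N.
Proof.
  unfold split_sum. cbn [length]. rewrite lsum_seq_S. f_equal.
  rewrite <- lsum_zcons. apply lsum_ext. intros k.
  apply (lsum_zcons a _ (fun j n => zeta_trunc q
    (firstn k s ++ (nth k s 0%nat - j)%nat :: (j + 1)%nat :: skipn (S k) s) n)).
Qed.

Lemma split_sum_trunc s N : List.Forall (fun x => (1 <= x)%nat) s ->
  split_sum (fun l => zeta_trunc q l N) s
  = raise_sum (fun l => zeta_trunc q l N) s - qdefect (zeta_trunc q s) N.
Proof.
  intros Hs. revert N. induction Hs as [|a s Ha Hs IH]; intros N.
  - unfold qdefect. rewrite (psum_ext N _ (fun _ => 0)); [rewrite psum_0; cbn; ring|].
    intros; cbn; ring.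
  - rewrite split_sum_trunc_cons, raise_sum_trunc_cons, zcons_split by exact Ha.
    replace (zcons a (fun n => split_sum (fun l => zeta_trunc q l n) s) N)
      with (zcons a (fun n => raise_sum (fun l => zeta_trunc q l n) s
                              - qdefect (zeta_trunc q s) n) N)
      by (apply psum_ext; intros n _; now rewrite IH).
    rewrite zcons_sub. change (zcons a (zeta_trunc q s)) with (zeta_trunc q (a :: s)). ring.
Qed.

Lemma zeta_trunc_cons_S b l n : (1 <= n)%nat ->
  zeta_trunc q (b :: l) (S n) = zeta_trunc q (b :: l) n + zterm q b n * zeta_trunc q l n.
Proof. apply zcons_S. Qed.

Lemma zeta_trunc_nonneg l n : 0 <= zeta_trunc q l n.
Proof.
  revert n. induction l as [|b l IH]; intros n; cbn [zeta_trunc]; [lra|].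
  apply (psum_nonneg n (fun k => zterm q b k * zeta_trunc q l k)). intros k Hk.
  apply Rmult_le_pos; [apply zterm_nonneg; lia|apply IH].
Qed.

Lemma zeta_trunc_le_geom l rho : 1 < rho ->
  exists C, 0 <= C /\ forall n, zeta_trunc q l n <= C * rho ^ n.
Proof.
  intros Hrho. induction l as [|b l [C [HC IH]]].
  - exists 1. split; [lra|]. intros n. cbn. rewrite Rmult_1_l. apply pow_R1_Rle. lra.
  - exists (C / (rho - 1)).
    split; [apply Rmult_le_pos; [lra|apply Rlt_le, Rinv_0_lt_compat; lra]|].
    intros n. apply Rle_trans with (psum n (fun k => C * rho ^ k)).
    + apply (psum_le n (fun k => zterm q b k * zeta_trunc q l k)). intros k Hk.
      pose proof (zterm_nonneg b k ltac:(lia)). pose proof (zterm_le1 b k ltac:(lia)).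
      pose proof (zeta_trunc_nonneg l k). pose proof (IH k). nra.
    + rewrite psum_scal_l. apply Rle_trans with (C * (rho ^ n / (rho - 1))).
      * apply Rmult_le_compat_l; [lra|]. exact (psum_pow_le_gt1 n rho Hrho).
      * apply Req_le. field. lra.
Qed.

Lemma zterm_zeta_trunc_le_geom b l : (2 <= b)%nat ->
  exists C rho, 0 <= C /\ 1 < rho /\ q * rho < 1 /\
  forall k, (1 <= k)%nat -> zterm q b k * zeta_trunc q l k <= C * (q * rho) ^ k.
Proof.
  intros Hb. set (rho := (1 + q) / (2 * q)).
  assert (Hrho : 1 < rho) by (apply Rcomplements.Rlt_div_r; lra).
  assert (Hqrho : q * rho < 1).
  { unfold rho. replace (q * ((1 + q) / (2 * q))) with ((1 + q) / 2) by (field; lra). lra. }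
  destruct (zeta_trunc_le_geom l rho Hrho) as [C [HC Hl]].
  exists C, rho. repeat split; try assumption. intros k Hk.
  pose proof (zterm_nonneg b k Hk). pose proof (zterm_le_pow b k Hb Hk).
  pose proof (zeta_trunc_nonneg l k). pose proof (Hl k). pose proof (pow_q_pos k).
  rewrite Rpow_mult_distr.
  apply Rle_trans with (q ^ k * zeta_trunc q l k); [now apply Rmult_le_compat_r|].
  replace (C * (q ^ k * rho ^ k)) with (q ^ k * (C * rho ^ k)) by ring.
  now apply Rmult_le_compat_l; [lra|].
Qed.

Lemma zeta_trunc_cvg b l : (2 <= b)%nat -> ex_finite_lim_seq (zeta_trunc q (b :: l)).
Proof.
  intros Hb. destruct (zterm_zeta_trunc_le_geom b l Hb) as (C & rho & HC & Hrho & Hqrho & Hz).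
  assert (0 < q * rho) by nra.
  apply ex_finite_lim_seq_incr with (M := C * (1 / (1 - q * rho))).
  - intros [|n]; [cbn; lra|]. rewrite (zeta_trunc_cons_S b l (S n)) by lia.
    pose proof (zterm_nonneg b (S n) ltac:(lia)). pose proof (zeta_trunc_nonneg l (S n)). nra.
  - intros n. apply Rle_trans with (psum n (fun k => C * (q * rho) ^ k)).
    + apply (psum_le n (fun k => zterm q b k * zeta_trunc q l k)). intros k Hk. apply Hz. lia.
    + rewrite psum_scal_l. apply Rmult_le_compat_l; [lra|].
      apply psum_pow_le_lt1. lra.
Qed.

Lemma qdefect_cvg_0 b l : (2 <= b)%nat -> is_lim_seq (qdefect (zeta_trunc q (b :: l))) 0.
Proof.
  intros Hb. destruct (zterm_zeta_trunc_le_geom b l Hb) as (C & rho & HC & Hrho & Hqrho & Hz).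
  assert (0 < q * rho) by nra.
  set (K := C / ((1 - q) * (rho - 1))).
  apply is_lim_seq_le_le with (u := fun _ => 0) (w := fun N => K * (q * rho) ^ N).
  - intros N. unfold qdefect. split.
    + apply psum_nonneg. intros p Hp. rewrite zeta_trunc_cons_S by lia.
      pose proof (zterm_nonneg b p ltac:(lia)). pose proof (zeta_trunc_nonneg l p).
      pose proof (qtail_bound N p Hp). apply Rmult_le_pos; [nra|lra].
    + apply Rle_trans with (psum N (fun p => C / (1 - q) * q ^ N * rho ^ p)).
      * apply psum_le. intros p Hp. rewrite zeta_trunc_cons_S by lia.
        pose proof (zterm_nonneg b p ltac:(lia)). pose proof (zeta_trunc_nonneg l p).
        pose proof (qtail_bound N p Hp). pose proof (Hz p ltac:(lia)).
        replace (C / (1 - q) * q ^ N * rho ^ p)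
          with (C * (q * rho) ^ p * (q ^ (N - p) / (1 - q))).
        2:{ rewrite Rpow_mult_distr. replace N with (p + (N - p))%nat at 2 by lia.
            rewrite pow_add. field. lra. }
        apply Rmult_le_compat; [nra|lra|lra|lra].
      * rewrite psum_scal_l. apply Rle_trans with (C / (1 - q) * q ^ N * (rho ^ N / (rho - 1))).
        { apply Rmult_le_compat_l; [|exact (psum_pow_le_gt1 N rho Hrho)].
          pose proof (pow_q_pos N). apply Rmult_le_pos; [apply Rmult_le_pos|]; try lra.
          apply Rlt_le, Rinv_0_lt_compat. lra. }
        apply Req_le. unfold K. rewrite Rpow_mult_distr. field. lra.
  - apply is_lim_seq_const.
  - replace (Finite 0) with (Rbar_mult K 0) by (cbn; f_equal; ring).
    apply is_lim_seq_scal_l, is_lim_seq_geom. rewrite Rabs_pos_eq; lra.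
Qed.

Lemma zeta_trunc_is_lim_qzeta s : (2 <= hd 0 s)%nat -> is_lim_seq (zeta_trunc q s) (qzeta q s).
Proof.
  destruct s as [|b l]; cbn [hd]; intros Hb; [lia|].
  destruct (zeta_trunc_cvg b l Hb) as [z Hz]. unfold qzeta.
  replace (Lim_seq (fun M => zeta_trunc q (b :: l) M)) with (Finite z); [exact Hz|].
  symmetry. now apply is_lim_seq_unique.
Qed.
End QZeta.

Lemma hd_splice a s k x l :
  hd 0%nat (firstn k (a :: s) ++ x :: l) = match k with O => x | S _ => a end.
Proof. now destruct k. Qed.

Theorem corollary4p3 (q : R) (s : list nat)
  (hq0 : 0 < q) (hq1 : q < 1)
  (hpos : List.Forall (fun x => (1 <= x)%nat) s)
  (hne : s <> [])
  (h1 : (1 < hd 0%nat s)%nat) :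
  lsum (seq 0 (length s))
    (fun k => qzeta q (firstn k s ++ (1 + nth k s 0%nat)%nat :: skipn (S k) s))
  = lsum (seq 0 (length s))
    (fun k => lsum (seq 0 (nth k s 0%nat - 1))
       (fun j => qzeta q (firstn k s ++ (nth k s 0%nat - j)%nat :: (j + 1)%nat :: skipn (S k) s))).
Proof.
  destruct s as [|a s]; [congruence|]. cbn [hd] in h1.
  change (raise_sum (qzeta q) (a :: s) = split_sum (qzeta q) (a :: s)).
  assert (Hraise : is_lim_seq (fun N => raise_sum (fun l => zeta_trunc q l N) (a :: s))
                              (raise_sum (qzeta q) (a :: s))).
  { apply is_lim_seq_lsum. intros k _.
    apply zeta_trunc_is_lim_qzeta; [assumption..|]. rewrite hd_splice. destruct k; cbn; lia. }
  assert (Hsplit : is_lim_seq (fun N => split_sum (fun l => zeta_trunc q l N) (a :: s))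
                              (split_sum (qzeta q) (a :: s))).
  { apply is_lim_seq_lsum. intros k _. apply is_lim_seq_lsum. intros j Hj. apply in_seq in Hj.
    apply zeta_trunc_is_lim_qzeta; [assumption..|].
    rewrite hd_splice. destruct k; cbn in Hj |- *; lia. }
  apply (is_lim_seq_ext _ _ _ (fun N => split_sum_trunc q hq0 hq1 (a :: s) N hpos)) in Hsplit.
  pose proof (is_lim_seq_minus' _ _ _ _ Hraise (qdefect_cvg_0 q hq0 hq1 a s h1)) as Hdiff.
  apply is_lim_seq_unique in Hsplit, Hdiff. rewrite Hsplit in Hdiff.
  injection Hdiff. lra.
Qed.
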